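(* Let $N=(S,T,F,M_0,\ell)$ be a Petri net and $N'=(S',T',F',M'_0,\ell')$ a plain Petri net with $S'\subseteq S$ and $M'_0=M_0\restriction S'$. Suppose: (1) for every $t\in T$ with $\ell(t)\ne\tau$ there are $t'\in T'$ with $\ell'(t')=\ell(t)$ and a finite $G\in\mathbb N^T$ with $\ell(G)\equiv\emptyset$ such that $[\![t']\!]=[\![t+G]\!]$; (2) for any finite $G\in\mathbb Z^T$ with $\ell(G)\equiv\emptyset$, $M'\in\mathbb N^{S'}$, $U'\in\mathbb N^{T'}$ and $U\in\mathbb N^T$ with $\ell'(U')=\ell(U)$, $M'+{}^\bullet U'\in[M'_0\rangle_{N'}$ and $M:=M'+{}^\bullet U'+(M_0-M'_0)+[\![G]\!]-{}^\bullet U\in\mathbb N^S$ with $M+{}^\bullet U\in[M_0\rangle_N$, it holds that: (a) there is no infinite sequence $M\xrightarrow{\tau}M_1\xrightarrow{\tau}M_2\xrightarrow{\tau}\cdots$; (b) if $M'\xrightarrow{a}$ with $a\in\mathrm{Act}$ then $M\xrightarrow{a}$ or $M\xrightarrow{\tau}$; (c) if $M\xrightarrow{a}$ with $a\in\mathrm{Act}$ then $M'\xrightarrow{a}$. Then $N\approx^\Delta_{bSTb}N'$.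
   Context: Fix visible actions $\mathrm{Act}$ and $\tau\notin\mathrm{Act}$. A Petri net $(S,T,F,M_0,\ell)$ has disjoint $S,T$, $F:(S\times T)\cup(T\times S)\to\mathbb N$, $M_0\in\mathbb N^S$, $\ell:T\to\mathrm{Act}\cup\{\tau\}$. A signed multiset over $X$ is a function $X\to\mathbb Z$ (finite if finitely many nonzero values); operations are pointwise; signed multisets over different sets are identified when they agree on the common domain and are zero elsewhere (e.g. $M'\in\mathbb N^{S'}$ is viewed over $S$). ${}^\bullet x(y)=F(y,x)$, $x^\bullet(y)=F(x,y)$, extended additively to finite signed multisets $G$ of transitions; $[\![G]\!]=G^\bullet-{}^\bullet G$. $\ell(G)=\sum_tG(t)\{\ell(t)\}$, and $\ell(G)\equiv\emptyset$ means $\ell(G)(a)=0$ for every $a\in\mathrm{Act}$. For a finite nonempty multiset $G$, $M[G\rangle M'$ iff ${}^\bullet G\le M$ and $M'=M-{}^\bullet G+G^\bullet$; $[M_0\rangle_N$ is the set of reachable markings. For arbitrary markings, $M\xrightarrow{\alpha}$ means $M[t\rangle$ for some $t$ with label $\alpha$ (in the respective net), and $M\xrightarrow{\tau}M_1$ means $M[t\rangle M_1$ with $\ell(t)=\tau$. Plain: $\ell$ injective and never $\tau$. $N\approx^\Delta_{bSTb}N'$ (branching ST-bisimilarity with explicit divergence): there is a relation $\mathcal B$ between ST-markings $(M,U)\in\mathbb N^S\times T^*$ of $N$ and of $N'$, relating $(M_0,\varepsilon)$ and $(M'_0,\varepsilon)$, such that: if $\mathfrak M_1\mathcal B\mathfrak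 M_2$ and $\mathfrak M_1\xrightarrow{\alpha}\mathfrak M_1'$ then $\mathfrak M_2\Rightarrow\mathfrak M_2^\dagger\xrightarrow{(\alpha)}\mathfrak M_2'$ with $\mathfrak M_1\mathcal B\mathfrak M_2^\dagger$, $\mathfrak M_1'\mathcal B\mathfrak M_2'$ ($\Rightarrow$ reflexive transitive closure of $\xrightarrow{\tau}$; $\xrightarrow{(\alpha)}$ is $\xrightarrow{\alpha}$ or, if $\alpha=\tau$, equality), and symmetrically; and if $\mathfrak M_1\mathcal B\mathfrak M_2$ and an infinite $\tau$-sequence from $\mathfrak M_1$ has all states related to $\mathfrak M_2$, there is an infinite $\tau$-sequence from $\mathfrak M_2$ with all pairs of states related, and symmetrically. ST-transitions: $(M,U)\xrightarrow{a^+}(M-{}^\bullet t,Ut)$ iff $\ell(t)=a\in\mathrm{Act}$, $M[t\rangle$; $(M,U)\xrightarrow{a^{-n}}(M+t^\bullet,U^{-n})$ iff the $n$-th element $t$ of $U$ has label $a$ ($U^{-n}$: it removed); $(M,U)\xrightarrow{\tau}(M',U)$ iff $M[t\rangle M'$ with $\ell(t)=\tau$. *)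

From mathcomp Require Import all_boot all_algebra.
Set Implicit Arguments. Unset Strict Implicit. Unset Printing Implicit Defensive.
Import GRing.Theory.

(* Visible actions: an eqType [Act]; tau is represented by [None : option Act]. *)

(* A Petri net (S,T,F,M0,l): F is split into F(s,t) = pre s t, F(t,s) = post t s. *)
Record petri_net (Act : Type) (S T : Type) := PetriNet {
  pre  : S -> T -> nat;
  post : T -> S -> nat;
  M0   : S -> nat;
  lab  : T -> option Act }.

Section Nets.
Variables (Act : eqType) (S T : Type) (N : petri_net Act S T).

Definition plain : Prop :=
  injective (lab N) /\ forall t, lab N t <> None.

(* finite multisets over T are represented by sequences (multiplicity = count);
   finite signed multisets by pairs (positive part, negative part). *)
Definition mpre (U : seq T) : S -> nat := fun s => \sum_(t <- U) pre N s t.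
Definition mpost (U : seq T) : S -> nat := fun s => \sum_(t <- U) post N t s.
Definition eff (U : seq T) : S -> int := fun s => (Posz (mpost U s) - Posz (mpre U s))%R.
Definition seff (G : seq T * seq T) : S -> int := fun s => (eff G.1 s - eff G.2 s)%R.

Definition lcount (U : seq T) (x : option Act) : nat :=
  count (fun t => lab N t == x) U.
Definition lab_empty (G : seq T * seq T) : Prop :=
  forall a : Act, lcount G.1 (Some a) = lcount G.2 (Some a).

Definition enabled (M : S -> nat) (t : T) : Prop := forall s, pre N s t <= M s.
Definition fire (M : S -> nat) (t : T) (M' : S -> nat) : Prop :=
  enabled M t /\ forall s, M' s = M s - pre N s t + post N t s.

Inductive reachable : (S -> nat) -> Prop :=
| reach_init : reachable (M0 N)
| reach_step M t M' : reachable M -> fire M t M' -> reachable M'.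

Definition can (M : S -> nat) (x : option Act) : Prop :=
  exists t, lab N t = x /\ enabled M t.

Definition no_tau_divergence (M : S -> nat) : Prop :=
  ~ exists f : nat -> (S -> nat),
      f 0 = M /\ forall n, exists t, lab N t = None /\ fire (f n) t (f n.+1).
End Nets.

Inductive stlab (Act : Type) := Start of Act | Finish of Act & nat | Tau.
Arguments Tau {Act}.

Section ST.
Variables (Act : eqType) (S T : Type) (N : petri_net Act S T).

Definition stmarking := ((S -> nat) * seq T)%type.

(* The n-th element (counting from 1) of U1 ++ t :: U2 is t, n = size U1 + 1. *)
Inductive st_step : stmarking -> stlab Act -> stmarking -> Prop :=
| st_start M U t a : lab N t = Some a -> enabled N M t ->
    st_step (M, U) (Start a) (fun s => M s - pre N s t, rcons U t)
| st_finish M U1 t U2 a : lab N t = Some a ->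
    st_step (M, U1 ++ t :: U2) (Finish a (size U1).+1)
            (fun s => M s + post N t s, U1 ++ U2)
| st_tau M U t M' : lab N t = None -> fire N M t M' ->
    st_step (M, U) Tau (M', U).
End ST.

Section Bisim.
Variables (Act : Type) (A B : Type).
Variables (stepA : A -> stlab Act -> A -> Prop) (stepB : B -> stlab Act -> B -> Prop).

Inductive tau_star (X : Type) (step : X -> stlab Act -> X -> Prop) : X -> X -> Prop :=
| ts_refl x : tau_star step x x
| ts_step x y z : step x Tau y -> tau_star step y z -> tau_star step x z.

Definition bsim_div (R : A -> B -> Prop) : Prop :=
  (forall p q, R p q -> forall (al : stlab Act) p', stepA p al p' ->
     exists q1 q', [/\ tau_star stepB q q1, R p q1, R p' q' &
                     (stepB q1 al q' \/ (al = Tau /\ q' = q1))]) /\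
  (forall p q (f : nat -> A), R p q -> f 0 = p ->
     (forall n, stepA (f n) Tau (f n.+1) /\ R (f n) q) ->
     exists g : nat -> B, [/\ g 0 = q, (forall n, stepB (g n) Tau (g n.+1)) &
                              forall i j, R (f i) (g j)]).
End Bisim.

Definition bbisim_div (Act : Type) (A B : Type)
  (stepA : A -> stlab Act -> A -> Prop) (stepB : B -> stlab Act -> B -> Prop)
  (R : A -> B -> Prop) : Prop :=
  bsim_div stepA stepB R /\ bsim_div stepB stepA (fun q p => R p q).

Definition bSTb_div_equiv (Act : eqType) (S1 T1 S2 T2 : Type)
  (N1 : petri_net Act S1 T1) (N2 : petri_net Act S2 T2) : Prop :=
  exists R : stmarking S1 T1 -> stmarking S2 T2 -> Prop,
    R (M0 N1, [::]) (M0 N2, [::]) /\ bbisim_div (st_step N1) (st_step N2) R.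

(* viewing a function on the subset S' = {s | P s} as a function on S (default d elsewhere) *)
Definition ext (S : Type) (P : pred S) (X : Type) (d : X) (f : {s | P s} -> X) (s : S) : X :=
  (if P s as b return P s = b -> X then fun h => f (exist _ s h) else fun _ => d)
    (erefl (P s)).

(** Relate an ST-marking (M, U) of N to an ST-marking (M', U') of N' when the
    running transitions U and U' carry the same labels in the same order, both
    M + •U and M' + •U' are reachable, and M is obtained from M' + •U' by the
    balance equation of hypothesis (2) for some label-free signed multiset G.
    Silent steps of N only enlarge G; starting a transition keeps G; finishing
    t in N and its label-twin t' in N' adds the G of hypothesis (1), which is
    well defined because N' is plain.  Hypothesis (2) then supplies the
    transfer properties: N can match any action of N' after finitely many
    silent steps (finite because N does not diverge), and N' can match any
    action of N directly; N' has no silent steps at all. *)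

From mathcomp Require Import all_boot all_algebra zify.
From Stdlib Require Import Classical ClassicalEpsilon FunctionalExtensionality.
Import GRing.Theory.

Set Implicit Arguments.
Unset Strict Implicit.

Lemma ext_in (S : Type) (P : pred S) (X : Type) (d : X) (f : {s | P s} -> X)
    s (Ps : P s) :
  ext d f s = f (exist _ s Ps).
Proof.
rewrite /ext; move: (erefl (P s)); case: {2 3}(P s) => e; last by rewrite Ps in e.
by congr f; congr exist; apply: bool_irrelevance.
Qed.

Lemma ext_out (S : Type) (P : pred S) (X : Type) (d : X) (f : {s | P s} -> X) s :
  P s = false -> ext d f s = d.
Proof.
move=> Ps; rewrite /ext; move: (erefl (P s)).
by case: {2 3}(P s) => // e; exfalso; rewrite Ps in e.
Qed.

Arguments ext_in {S P X d f s}.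
Arguments ext_out {S P X d f s}.

Lemma map_cat_cons_split (A B X : Type) (f : A -> X) (g : B -> X) U1 t U2 V :
  map f (U1 ++ t :: U2) = map g V ->
  exists V1 t' V2, V = V1 ++ t' :: V2 /\ size V1 = size U1.
Proof.
elim: U1 V => [|x U1 IH] [|y V] //= [_ eV]; first by exists [::], y, V.
have [V1 [t' [V2 [-> eS]]]] := IH _ eV.
by exists (y :: V1), t', V2; rewrite /= eS.
Qed.

Lemma map_cat_cons_eq (A B : Type) (X : eqType) (f : A -> X) (g : B -> X) U1 t U2 V1 t' V2 :
  size U1 = size V1 -> map f (U1 ++ t :: U2) = map g (V1 ++ t' :: V2) ->
  f t = g t' /\ map f (U1 ++ U2) = map g (V1 ++ V2).
Proof.
move=> eS /eqP; rewrite !map_cat eqseq_cat ?size_map //.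
by case/andP => /eqP -> /eqP [-> ->].
Qed.

Lemma tau_star_rcons (Act X : Type) (step : X -> stlab Act -> X -> Prop) x y z :
  tau_star step x y -> step y Tau z -> tau_star step x z.
Proof.
elim=> [x0 st|x0 y0 z0 st _ IH /IH]; first exact: ts_step st (ts_refl _ _).
exact: ts_step st.
Qed.

(* Otherwise every state reachable inside Inv has a silent successor inside
   Inv, and dependent choice yields an infinite silent run from x0. *)
Lemma tau_star_search (Act X : Type) (step : X -> stlab Act -> X -> Prop)
    (Inv Q : X -> Prop) x0 :
  Inv x0 ->
  (forall x, Inv x -> Q x \/ exists2 y, step x Tau y & Inv y) ->
  ~ (exists f : nat -> X, f 0 = x0 /\ forall n, step (f n) Tau (f n.+1)) ->
  exists y, [/\ tau_star step x0 y, Inv y & Q y].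
Proof.
move=> Inv0 progress nodiv; apply: NNPP => noQ; apply: nodiv.
pose Good y := tau_star step x0 y /\ Inv y.
have succ (x : {y | Good y}) : exists y : {y | Good y}, step (sval x) Tau (sval y).
  case: x => x [x0x Invx]; case: (progress x Invx) => [Qx | [y xy Invy]].
    by case: noQ; exists x.
  by exists (exist Good y (conj (tau_star_rcons x0x xy) Invy)).
have [next nextP] := choice _ succ.
pose start : {y | Good y} := exist Good x0 (conj (ts_refl _ _) Inv0).
by exists (fun n => sval (iter n next start)); split => // n; rewrite iterS.
Qed.

Section NetFacts.
Variables (Act : eqType) (S T : Type) (N : petri_net Act S T).

Lemma reachable_eq (M M' : S -> nat) :
  reachable N M -> M =1 M' -> reachable N M'.
Proof. by move=> ? /functional_extensionality <-. Qed.

Lemma mpre_nil s : mpre N [::] s = 0.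
Proof. by rewrite /mpre big_nil. Qed.

Lemma mpost_nil s : mpost N [::] s = 0.
Proof. by rewrite /mpost big_nil. Qed.

Lemma mpre_cons t U s : mpre N (t :: U) s = pre N s t + mpre N U s.
Proof. by rewrite /mpre big_cons. Qed.

Lemma mpost_cons t U s : mpost N (t :: U) s = post N t s + mpost N U s.
Proof. by rewrite /mpost big_cons. Qed.

Lemma mpre_cat U V s : mpre N (U ++ V) s = mpre N U s + mpre N V s.
Proof. by rewrite /mpre big_cat. Qed.

Lemma mpost_cat U V s : mpost N (U ++ V) s = mpost N U s + mpost N V s.
Proof. by rewrite /mpost big_cat. Qed.

Lemma mpre_rcons U t s : mpre N (rcons U t) s = mpre N U s + pre N s t.
Proof. by rewrite -cats1 mpre_cat mpre_cons mpre_nil addn0. Qed.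

Lemma lcount_map U x : lcount N U x = count (pred1 x) (map (lab N) U).
Proof. by rewrite /lcount count_map. Qed.

Lemma st_step_tau p p' :
  st_step N p Tau p' -> exists2 t, lab N t = None & fire N p.1 t p'.1.
Proof.
have gen al : st_step N p al p' -> al = Tau -> exists2 t, lab N t = None & fire N p.1 t p'.1.
  by case=> // M U t M' lt ft _; exists t.
by move/gen; apply.
Qed.

Lemma st_no_tau_divergence p :
  no_tau_divergence N p.1 ->
  ~ exists f, f 0 = p /\ forall n, st_step N (f n) Tau (f n.+1).
Proof.
move=> nodiv [f [f0 steps]]; apply: nodiv.
exists (fun n => (f n).1); split=> [|n]; first by rewrite f0.
by have [t lt ft] := st_step_tau (steps n); exists t.
Qed.

Lemma plain_no_st_tau p p' : plain N -> ~ st_step N p Tau p'.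
Proof. by move=> [_ nontau] /st_step_tau [t /nontau]. Qed.

End NetFacts.

Section Bisimulation.
Variables (Act : eqType) (S T T' : Type) (P : pred S).
Variables (N : petri_net Act S T) (N' : petri_net Act {s | P s} T').

Definition balanced (M' : {s | P s} -> nat) (U' : seq T') (U : seq T)
    (M : S -> nat) (G : seq T * seq T) : Prop :=
  forall s, Posz (M s) = (Posz (ext 0%N M' s) + Posz (ext 0%N (mpre N' U') s)
                          + (Posz (M0 N s) - Posz (ext 0%N (M0 N') s))
                          + seff N G s - Posz (mpre N U s))%R.

Definition related (p : stmarking S T) (q : stmarking {s | P s} T') : Prop :=
  [/\ map (lab N) p.2 = map (lab N') q.2,
      reachable N' (fun s => q.1 s + mpre N' q.2 s),
      reachable N (fun s => p.1 s + mpre N p.2 s) &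
      exists2 G, lab_empty N G & balanced q.1 q.2 p.2 p.1 G].

Lemma related_init :
  (forall s' : {s | P s}, M0 N' s' = M0 N (val s')) ->
  related (M0 N, [::]) (M0 N', [::]).
Proof.
move=> HM0; split=> //=.
- by apply: (reachable_eq (reach_init _)) => s; rewrite mpre_nil addn0.
- by apply: (reachable_eq (reach_init _)) => s; rewrite mpre_nil addn0.
exists ([::], [::]) => // s; rewrite /seff /eff /= !mpre_nil !mpost_nil.
case Ps: (P s); last by rewrite !(ext_out Ps); lia.
by rewrite !(ext_in Ps) /= mpre_nil HM0; lia.
Qed.

Lemma related_tau M U q t M1 :
  related (M, U) q -> lab N t = None -> fire N M t M1 -> related (M1, U) q.
Proof.
case: q => M' U' [/= eL reach' reach [G emptyG bal]] lt [en ft]; split=> //=.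
  by apply: (reach_step (t := t) reach); split=> s /=; have := en s; have := ft s; lia.
exists (t :: G.1, G.2).
  by move=> a; rewrite /lcount /= lt; exact: emptyG.
move=> s; have := bal s; have := en s; have := ft s.
by rewrite /seff /eff /= mpre_cons mpost_cons; lia.
Qed.

Lemma related_start M U M' U' t t' a :
  related (M, U) (M', U') -> lab N t = Some a -> lab N' t' = Some a ->
  enabled N M t -> enabled N' M' t' ->
  related (fun s => M s - pre N s t, rcons U t) (fun s => M' s - pre N' s t', rcons U' t').
Proof.
move=> [/= eL reach' reach [G emptyG bal]] lt lt' en en'; split=> /=.
- by rewrite !map_rcons eL lt lt'.
- by apply: (reachable_eq reach') => s; rewrite mpre_rcons; have := en' s; lia.
- by apply: (reachable_eq reach) => s; rewrite mpre_rcons; have := en s; lia.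
exists G => // s; have := bal s; have := en s; rewrite mpre_rcons.
case Ps: (P s); last by rewrite !(ext_out Ps); lia.
by rewrite !(ext_in Ps) /= mpre_rcons; have := en' (exist _ s Ps); lia.
Qed.

Hypothesis plain_N' : plain N'.
Hypothesis visible_twin : forall t : T, lab N t <> None ->
  exists (t' : T') (G : seq T),
    [/\ lab N' t' = lab N t, lab_empty N (G, [::]) &
        forall s, ext 0%R (eff N' [:: t']) s = eff N (t :: G) s].

Lemma related_finish M U1 t U2 M' V1 t' V2 :
  related (M, U1 ++ t :: U2) (M', V1 ++ t' :: V2) -> size U1 = size V1 ->
  lab N t <> None ->
  related (fun s => M s + post N t s, U1 ++ U2) (fun s => M' s + post N' t' s, V1 ++ V2).
Proof.
move=> [/= eL reach' reach [G emptyG bal]] eS lt.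
have [elt eL12] := map_cat_cons_eq eS eL.
split=> //=.
- by apply: (reach_step (t := t') reach'); split=> s /=; rewrite !mpre_cat mpre_cons; lia.
- by apply: (reach_step (t := t) reach); split=> s /=; rewrite !mpre_cat mpre_cons; lia.
have [t'' [G0 [lt'' emptyG0 eff_t]]] := visible_twin lt.
have et : t'' = t' by apply: plain_N'.1; rewrite lt'' elt.
subst t''.
exists (G.1, G.2 ++ G0).
  by move=> b; have := emptyG b; have := emptyG0 b; rewrite /lcount /= count_cat; lia.
move=> s; have := bal s; have := eff_t s.
rewrite /seff /eff /= ?mpre_cat ?mpost_cat ?mpre_cons ?mpost_cons.
case Ps: (P s); last by rewrite !(ext_out Ps); lia.
by rewrite !(ext_in Ps) /= ?mpre_cat ?mpre_cons ?mpost_cons ?mpre_nil ?mpost_nil; lia.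
Qed.

Hypothesis transfer : forall (G : seq T * seq T) (M' : {s | P s} -> nat) (U' : seq T')
    (U : seq T) (M : S -> nat),
  lab_empty N G ->
  (forall x, lcount N' U' x = lcount N U x) ->
  reachable N' (fun s => M' s + mpre N' U' s) ->
  balanced M' U' U M G ->
  reachable N (fun s => M s + mpre N U s) ->
  [/\ no_tau_divergence N M,
      (forall a : Act, can N' M' (Some a) -> can N M (Some a) \/ can N M None) &
      (forall a : Act, can N M (Some a) -> can N' M' (Some a))].

Lemma related_transfer p q : related p q ->
  [/\ no_tau_divergence N p.1,
      (forall a : Act, can N' q.1 (Some a) -> can N p.1 (Some a) \/ can N p.1 None) &
      (forall a : Act, can N p.1 (Some a) -> can N' q.1 (Some a))].
Proof.
case: p q => [M U] [M' U'] [/= eL reach' reach [G emptyG bal]].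
by apply: (transfer emptyG _ reach' bal reach) => x; rewrite !lcount_map eL.
Qed.

Lemma related_tau_progress a M U q : related (M, U) q -> can N' q.1 (Some a) ->
  can N M (Some a) \/ exists2 p, st_step N (M, U) Tau p & related p q.
Proof.
move=> Rpq can_a; have [_ /(_ a can_a) [can_N|[t [lt en]]] _] := related_transfer Rpq.
  by left.
right; pose M1 s := M s - pre N s t + post N t s.
have fire_t : fire N M t M1 by [].
by exists (M1, U); [exact: st_tau lt fire_t | exact: related_tau Rpq lt fire_t].
Qed.

Lemma related_sim_N : bsim_div (st_step N) (st_step N') related.
Proof.
split=> [p q Rpq al p' st|p q f Rpq f0 run].
  case: st Rpq => [M U t a lt en|M U1 t U2 a lt|M U t M1 lt ft] Rpq.
  - case: q Rpq => M' U' Rpq.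
    have [_ _ match_N'] := related_transfer Rpq.
    have [t' [lt' en']] : can N' M' (Some a) by apply: match_N'; exists t.
    exists (M', U'), (fun s => M' s - pre N' s t', rcons U' t'); split=> //.
    + exact: ts_refl.
    + exact: related_start Rpq lt lt' en en'.
    + by left; constructor.
  - case: q Rpq => M' V Rpq; have [/= eL _ _ _] := Rpq.
    have [V1 [t' [V2 [eV eS]]]] := map_cat_cons_split eL; subst V.
    have [elt _] := map_cat_cons_eq (esym eS) eL.
    exists (M', V1 ++ t' :: V2), (fun s => M' s + post N' t' s, V1 ++ V2); split=> //.
    + exact: ts_refl.
    + by apply: related_finish Rpq (esym eS) _; rewrite lt.
    + by left; rewrite -eS; constructor; rewrite -elt.
  - exists q, q; split=> //; [exact: ts_refl | exact: related_tau Rpq lt ft | by right].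
have [nodiv _ _] := related_transfer Rpq.
by case: (st_no_tau_divergence nodiv); exists f; split=> // n; case: (run n).
Qed.

Lemma related_sim_N' : bsim_div (st_step N') (st_step N) (fun q p => related p q).
Proof.
split=> [q p Rpq al q' st|q p f _ _ run]; last first.
  by case: (run 0) => /(plain_no_st_tau plain_N').
case: st Rpq => [M' U' t' a lt' en'|M' V1 t' V2 a lt'|M' U' t' M1 lt' _] Rpq.
- case: p Rpq => M U Rpq.
  have [[M1 U1] [steps Rp1q /= [t [lt en]]]] :
      exists p1, [/\ tau_star (st_step N) (M, U) p1, related p1 (M', U')
                   & can N p1.1 (Some a)].
    have [nodiv _ _] := related_transfer Rpq.
    apply: (tau_star_search (Inv := related^~ (M', U')) Rpq) => [[M2 U2] Rp2q|].
      by case: (related_tau_progress Rp2q (ex_intro _ t' (conj lt' en'))); auto.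
    exact: st_no_tau_divergence nodiv.
  exists (M1, U1), (fun s => M1 s - pre N s t, rcons U1 t); split=> //.
  + exact: related_start Rp1q lt lt' en en'.
  + by left; constructor.
- case: p Rpq => M U Rpq; have [/= eL _ _ _] := Rpq.
  have [U1 [t [U2 [eU eS]]]] := map_cat_cons_split (esym eL); subst U.
  have [elt _] := map_cat_cons_eq eS eL.
  exists (M, U1 ++ t :: U2), (fun s => M s + post N t s, U1 ++ U2); split=> //.
  + exact: ts_refl.
  + by apply: related_finish Rpq eS _; rewrite elt lt'.
  + by left; rewrite -eS; constructor; rewrite elt.
- by case: (proj2 plain_N' _ lt').
Qed.

End Bisimulation.

Theorem lemma6p4 (Act : eqType) (S T T' : Type) (P : pred S)
  (N : petri_net Act S T) (N' : petri_net Act {s | P s} T')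
  (Hplain : plain N')
  (HM0 : forall s' : {s | P s}, M0 N' s' = M0 N (val s'))
  (H1 : forall t : T, lab N t <> None ->
     exists (t' : T') (G : seq T),
       [/\ lab N' t' = lab N t, lab_empty N (G, [::]) &
           forall s, ext 0%R (eff N' [:: t']) s = eff N (t :: G) s])
  (H2 : forall (G : seq T * seq T) (M' : {s | P s} -> nat) (U' : seq T') (U : seq T)
          (M : S -> nat),
     lab_empty N G ->
     (forall x, lcount N' U' x = lcount N U x) ->
     reachable N' (fun s => M' s + mpre N' U' s) ->
     (forall s, Posz (M s) = (Posz (ext 0%N M' s) + Posz (ext 0%N (mpre N' U') s)
                            + (Posz (M0 N s) - Posz (ext 0%N (M0 N') s))
                            + seff N G s - Posz (mpre N U s))%R) ->
     reachable N (fun s => M s + mpre N U s) ->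
     [/\ no_tau_divergence N M,
         (forall a : Act, can N' M' (Some a) -> can N M (Some a) \/ can N M None) &
         (forall a : Act, can N M (Some a) -> can N' M' (Some a))]) :
  bSTb_div_equiv N N'.
Proof.
exists (related N N'); split; first exact: related_init.
by split; [exact: related_sim_N Hplain H1 H2 | exact: related_sim_N' Hplain H1 H2].
Qed.
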